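(* Let $G$ and $H$ be two nontrivial connected graphs. Then $$\max\{hn_{cc}(G),hn_{cc}(H),3\}\leq hn_{cc}(G\Box H)\leq hn_{cc}(G)+hn_{cc}(H)-1.$$
   Context: All graphs are finite, simple and undirected. For a graph $G$ and $S\subseteq V(G)$, the cycle interval $\langle S\rangle$ consists of the vertices of $S$ together with every vertex $w\in V(G)\setminus S$ such that $G[S\cup\{w\}]$ contains a cycle through $w$; $S$ is cycle convex if $\langle S\rangle=S$; the cycle convex hull $\langle S\rangle_C$ is the smallest cycle convex set containing $S$; a hull set is a set $S$ with $\langle S\rangle_C=V(G)$, and $hn_{cc}(G)$ is the minimum cardinality of a hull set. The Cartesian product $G\Box H$ has vertex set $V(G)\times V(H)$, with $(g_1,h_1)\sim(g_2,h_2)$ iff ($g_1\sim g_2$ and $h_1=h_2$) or ($g_1=g_2$ and $h_1\sim h_2$). A graph is nontrivial if it has at least two vertices. *)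

From mathcomp Require Import all_boot.
Set Implicit Arguments. Unset Strict Implicit. Unset Printing Implicit Defensive.

Section CycleConvexity.
Variable T : finType.
Implicit Types (e : rel T) (S X : {set T}) (w : T).

Definition simple_graph e := symmetric e /\ irreflexive e.
Definition graph_connected e := forall x y : T, connect e x y.
Definition nontrivial := 1 < #|T|.

(* G[X] contains a cycle through w: a sequence of pairwise distinct vertices
   of X, of length >= 3, consecutive (cyclically) adjacent, containing w.
   Such a cycle has length <= #|T|, so we quantify over bounded tuples. *)
Definition cycle_through e X w : bool :=
  [exists n : 'I_#|T|.+1, exists t : n.-tuple T,
     [&& 3 <= n, uniq t, cycle e t, w \in t & all (fun x => x \in X) t]].

Definition cc_interval e S : {set T} :=
  S :|: [set w | (w \notin S) && cycle_through e (w |: S) w].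

Definition cc_convex e S : bool := cc_interval e S == S.

Definition cc_hull e S : {set T} :=
  \bigcap_(C : {set T} | cc_convex e C && (S \subset C)) C.

Definition hull_set e S : bool := cc_hull e S == [set: T].

(* hn_cc: minimum cardinality of a hull set ([set: T] is always one) *)
Definition hn_cc e : nat :=
  \big[minn/#|T|]_(S : {set T} | hull_set e S) #|S|.

End CycleConvexity.

Definition box_rel (T1 T2 : finType) (e1 : rel T1) (e2 : rel T2) : rel (T1 * T2) :=
  fun u v => (e1 u.1 v.1 && (u.2 == v.2)) || ((u.1 == v.1) && e2 u.2 v.2).

From mathcomp Require Import all_boot zify.

(* The projections of G □ H onto its factors, and the inclusions of the layers
   G × {h} and {g} × H, collapse or preserve each edge and are injective on the
   non-collapsed neighbours of every vertex; under such maps preimages of cycle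
   convex sets are cycle convex.  Hence projections of hull sets are hull sets,
   which gives the first two lower bounds.  A set of at most two vertices lies
   in a single layer (convex, and proper since both factors are nontrivial) or
   is an independent pair, itself convex, so a hull set needs 3 vertices.  For
   the upper bound, the hull of S1 × {h0} ∪ {g0} × S2 contains the two layers
   through (g0, h0), and a convex set containing them is everything: by
   connectivity, each remaining vertex is the fourth corner of a 4-cycle whose
   other three corners are already in the set. *)

Set Implicit Arguments.
Unset Strict Implicit.
Unset Printing Implicit Defensive.

Lemma connect_map (T T' : finType) (e : rel T) (e' : rel T') (f : T -> T') :
  (forall x y, e x y -> connect e' (f x) (f y)) ->
  forall x y, connect e x y -> connect e' (f x) (f y).
Proof.
move=> fe x _ /connectP[p ep ->]; elim: p x ep => //= y p IHp x /andP[/fe exy].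
by move/IHp; apply: connect_trans.
Qed.

Lemma connected_closed_all (T : finType) (e : rel T) (P : pred T) x :
  symmetric e -> graph_connected e ->
  (forall u v, e u v -> P u -> P v) -> P x -> forall y, P y.
Proof.
move=> e_sym e_conn P_closed Px y.
have P_cl : closed e P := intro_closed (sym_connect_sym e_sym) P_closed.
by have := closed_connect P_cl (e_conn x y); rewrite !unfold_in Px => <-.
Qed.

Section CycleConvexity.
Variables (T : finType) (e : rel T).
Implicit Types (S X Y C : {set T}) (w : T).

Definition induced X : rel T := fun x y => [&& x \in X, y \in X & e x y].

Lemma induced_path_all X x p : path (induced X) x p -> all (fun y => y \in X) p.
Proof. by elim: p x => //= y p IHp x /andP[/and3P[_ -> _] /IHp]. Qed.

Definition closes_cycle X w := exists u v,
  [/\ u != v, e w u && e w v, u \in X, v \in X & connect (induced X) u v].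

Lemma cycle_throughP X w :
  reflect (exists s : seq T,
             [&& 3 <= size s, uniq s, cycle e s, w \in s & all (fun x => x \in X) s])
          (cycle_through e X w).
Proof.
apply: (iffP existsP) => [[n /existsP[t Ht]]|[s Hs]].
  by exists (tval t); rewrite size_tuple.
have us : uniq s by case/and5P: Hs.
have size_s : size s < #|T|.+1 by rewrite ltnS -(card_uniqP us) max_card.
by exists (Ordinal size_s); apply/existsP; exists (in_tuple s).
Qed.

Lemma cycle_throughS X Y w :
  X \subset Y -> cycle_through e X w -> cycle_through e Y w.
Proof.
move=> sXY /cycle_throughP[s /and5P[s3 us cs ws sX]]; apply/cycle_throughP.
exists s; rewrite s3 us cs ws; apply: sub_all sX => x; exact: (subsetP sXY).
Qed.

Lemma subset_cc_hull S : S \subset cc_hull e S.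
Proof. by apply/subsetP=> x xS; apply/bigcapP=> C /andP[_ /subsetP]; apply. Qed.

Lemma cc_hull_min S C : cc_convex e C -> S \subset C -> cc_hull e S \subset C.
Proof. by move=> cC sSC; apply: (bigcap_inf C); rewrite cC sSC. Qed.

Lemma cc_hull_convex S : cc_convex e (cc_hull e S).
Proof.
apply/eqP/setUidPl/subsetP=> w; rewrite inE => /andP[/negP wK ct]; case: wK.
apply/bigcapP=> C /andP[cC sSC]; apply/negPn/negP=> wC.
have: w \in cc_interval e C.
  rewrite !inE (negbTE wC) /=; apply: cycle_throughS ct.
  by rewrite setUS // cc_hull_min.
by rewrite (eqP cC) (negbTE wC).
Qed.

Lemma hull_setP S :
  reflect (forall C, cc_convex e C -> S \subset C -> C = setT) (hull_set e S).
Proof.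
apply: (iffP eqP) => [hS C cC sSC|hS].
  by apply/eqP; rewrite eqEsubset subsetT -hS cc_hull_min.
exact: hS (cc_hull_convex S) (subset_cc_hull S).
Qed.

Lemma hull_setT : hull_set e setT.
Proof. by apply/hull_setP=> C _; rewrite subTset => /eqP. Qed.

Lemma hn_cc_min S : hull_set e S -> hn_cc e <= #|S|.
Proof.
rewrite /hn_cc => hS; have: S \in index_enum {set T} by rewrite mem_index_enum.
elim: (index_enum _) => [|X r IHr] //; rewrite in_cons big_cons.
case/predU1P=> [<-|/IHr]; first by rewrite hS geq_minl.
by case: ifP => // _ le_rS; rewrite geq_min le_rS orbT.
Qed.

Lemma hn_cc_witness : exists2 S, hull_set e S & #|S| = hn_cc e.
Proof.
apply: (big_ind (fun m => exists2 S, hull_set e S & #|S| = m)) => //.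
- by exists setT; rewrite ?hull_setT ?cardsT.
- move=> _ _ [S hS <-] [S' hS' <-].
  by case: (leqP #|S| #|S'|) => le; [exists S | exists S'];
    rewrite // (minn_idPl le, minn_idPr (ltnW le)).
- by move=> S hS; exists S.
Qed.

Hypothesis e_sym : symmetric e.

Lemma closes_cycleP X w :
  w \notin X -> reflect (closes_cycle X w) (cycle_through e (w |: X) w).
Proof.
move=> wX; apply: (iffP (cycle_throughP _ _)) => [[s]|[u [v [uv /andP[ewu ewv] uX vX]]]].
  case/and5P=> s3 us cs /rot_to[i s' def_s] sX.
  rewrite -(size_rot i) -(rot_uniq i) -(rot_cycle i) def_s in s3 us cs.
  have s'X : all (fun x => x \in X) s'.
    apply/allP=> x xs'; have /(allP sX) : x \in s by rewrite -(mem_rot i) def_s inE xs' orbT.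
    by case/setU1P=> // xw; move: us; rewrite /= -xw xs'.
  case: s' s3 us cs s'X {def_s} => [|u [|u' r]] // _.
  rewrite cons_uniq => /andP[_ /andP[ur _]].
  rewrite /= rcons_path => /and4P[ewu euu' pr erw] /and3P[uX u'X rX].
  exists u, (last u' r); split=> //.
  - by apply: contraNneq ur => ->; rewrite mem_last.
  - by rewrite ewu e_sym.
  - by move: (mem_last u' r); rewrite inE => /predU1P[->|/(allP rX)].
  apply/connectP; exists (u' :: r) => //.
  apply: (@sub_in_path _ (fun x => x \in X) e) => [x y xX yX exy|/=|].
  - exact/and3P.
  - by rewrite uX u'X rX.
  - by rewrite /= euu'.
case/connectP=> p pp lp; case: (shortenP pp) => {pp}p' pp' up' _ in lp.
have p'X := induced_path_all pp'.
have wp' : w \notin u :: p'.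
  by apply: contra wX; rewrite inE => /predU1P[->|/(allP p'X)].
case: p' pp' up' lp p'X wp' => [|x p'] pp' up' lp p'X wp'; first by rewrite lp eqxx in uv.
exists [:: w, u, x & p'].
apply/and5P; split.
- by [].
- by rewrite cons_uniq wp' up'.
- rewrite -[cycle _ _]/(e w u && path e u (rcons (x :: p') w)).
  rewrite ewu rcons_path -lp e_sym ewv andbT.
  by apply: sub_path pp' => a b /and3P[].
- exact: mem_head.
- apply/allP=> y; rewrite inE => /predU1P[->|yp]; first exact: setU11.
  by apply/setU1r; move: yp; rewrite inE => /predU1P[->|/(allP p'X)].
Qed.

Lemma cc_convexP C : reflect (forall w, w \notin C -> ~ closes_cycle C w) (cc_convex e C).
Proof.
apply: (iffP eqP) => [cC w wC /(closes_cycleP wC) ct|noC].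
  by move: (wC); rewrite -{1}cC !inE (negbTE wC) ct.
apply/setUidPl/subsetP=> w; rewrite inE => /andP[wC /(closes_cycleP wC)].
by move/(noC w wC).
Qed.

Lemma cc_convex0 : cc_convex e set0.
Proof. by apply/cc_convexP=> w _ [u [v [_ _]]]; rewrite inE. Qed.

Lemma hull_set_neq0 S : 0 < #|T| -> hull_set e S -> S != set0.
Proof.
case/card_gt0P=> x _ /hull_setP hS; apply/negP=> /eqP/setP S0.
by have /setP/(_ x) := hS set0 cc_convex0 (eq_subxx S0); rewrite !inE.
Qed.

Lemma cc_convex1 x : cc_convex e [set x].
Proof.
apply/cc_convexP=> w _ [u [v [uv _ uX vX _]]].
by rewrite !inE in uX vX; rewrite (eqP uX) (eqP vX) eqxx in uv.
Qed.

Lemma hull_set_nsub1 S x : 1 < #|T| -> hull_set e S -> ~~ (S \subset [set x]).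
Proof.
move=> T_nontriv /hull_setP hS; apply/negP=> /(hS _ (cc_convex1 x)) xT.
by move: T_nontriv; rewrite -cardsT -xT cards1.
Qed.

Lemma cc_convex_indep C : {in C &, forall x y, ~~ e x y} -> cc_convex e C.
Proof.
move=> indepC; apply/cc_convexP=> w _ [u [v [uv _ _ _ /connectP[[|y p] /=]]]].
  by move=> _ vu; rewrite vu eqxx in uv.
by case/andP=> /and3P[uC yC euy]; move: (indepC u y uC yC); rewrite euy.
Qed.

Lemma cc_convex_square C w a b c :
  cc_convex e C -> a \in C -> b \in C -> c \in C -> a != c ->
  e w a -> e w c -> e a b -> e b c -> w \in C.
Proof.
move=> /cc_convexP convC aC bC cC ac ewa ewc eab ebc; apply/negPn/negP=> wC.
apply: (convC w wC); exists a, c; split; rewrite ?ewa ?ewc //.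
by apply: (@connect_trans _ _ b); apply: connect1; apply/and3P.
Qed.

End CycleConvexity.

Section Preimage.
Variables (T T' : finType) (e : rel T) (e' : rel T').
Hypotheses (e_sym : symmetric e) (e'_sym : symmetric e').

Definition cc_morphism (f : T -> T') :=
  (forall a b, e a b -> f a != f b -> e' (f a) (f b)) /\
  (forall w u v, e w u -> e w v -> f w != f u -> f u = f v -> u = v).

Variables (f : T -> T') (f_cc : cc_morphism f).

Lemma cc_convex_preim C : cc_convex e' C -> cc_convex e (f @^-1: C).
Proof.
case: f_cc => f_edge f_nbr_inj /(cc_convexP e'_sym) cC; apply/(cc_convexP e_sym)=> w.
rewrite inE => wC [u [v [uv /andP[ewu ewv] uC vC cuv]]]; rewrite !inE in uC vC.
have fwu : f w != f u by apply: contraNneq wC => ->.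
have fwv : f w != f v by apply: contraNneq wC => ->.
apply: (cC _ wC); exists (f u), (f v); split=> //.
- by apply: contra uv => /eqP/(f_nbr_inj _ _ _ ewu ewv fwu) ->.
- by rewrite !f_edge.
apply: connect_map cuv => x y /and3P[xC yC exy]; rewrite !inE in xC yC.
have [-> | fxy] := eqVneq (f x) (f y); first exact: connect0.
by apply: connect1; rewrite /induced xC yC f_edge.
Qed.

Lemma hull_set_map_mem S C :
  hull_set e S -> cc_convex e' C -> f @: S \subset C -> forall x, f x \in C.
Proof.
move=> /hull_setP hS cC; rewrite sub_imset_pre => /(hS _ (cc_convex_preim cC)) preT x.
by have := in_setT x; rewrite -preT inE.
Qed.

Lemma hull_set_image g S : cancel g f -> hull_set e S -> hull_set e' (f @: S).
Proof.
move=> gK hS; apply/hull_setP=> C cC sfSC; apply/setP=> y.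
by rewrite -(gK y) inE (hull_set_map_mem hS).
Qed.

End Preimage.

Section BoxProduct.
Variables (T1 T2 : finType) (e1 : rel T1) (e2 : rel T2).
Hypotheses (e1_sym : symmetric e1) (e2_sym : symmetric e2).
Local Notation G := (box_rel e1 e2).

Lemma box_rel_sym : symmetric G.
Proof. by move=> [a b] [c d]; rewrite /box_rel /= e1_sym e2_sym (eq_sym a) (eq_sym b). Qed.

Lemma box_rel_fst x y : G x y -> x.1 != y.1 -> e1 x.1 y.1 && (x.2 == y.2).
Proof. by case/orP=> [//|/andP[/eqP-> _]]; rewrite eqxx. Qed.

Lemma box_rel_snd x y : G x y -> x.2 != y.2 -> (x.1 == y.1) && e2 x.2 y.2.
Proof. by case/orP=> [/andP[_ /eqP->]|//]; rewrite eqxx. Qed.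

Lemma fst_cc_morphism : cc_morphism G e1 fst.
Proof.
split=> [x y /box_rel_fst exy /exy /andP[] // | w u v ewu ewv wu uv].
case/andP: (box_rel_fst ewu wu) => _ /eqP wu2.
have wv : w.1 != v.1 by rewrite -uv.
case/andP: (box_rel_fst ewv wv) => _ /eqP wv2.
by rewrite [u]surjective_pairing [v]surjective_pairing uv -wu2 -wv2.
Qed.

Lemma snd_cc_morphism : cc_morphism G e2 snd.
Proof.
split=> [x y /box_rel_snd exy /exy /andP[] // | w u v ewu ewv wu uv].
case/andP: (box_rel_snd ewu wu) => /eqP wu1 _.
have wv : w.2 != v.2 by rewrite -uv.
case/andP: (box_rel_snd ewv wv) => /eqP wv1 _.
by rewrite [u]surjective_pairing [v]surjective_pairing uv -wu1 -wv1.
Qed.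

Lemma pairl_cc_morphism h : cc_morphism e1 G (fun g => (g, h)).
Proof. by split=> [a b eab _ | w u v _ _ _ [] //]; rewrite /box_rel /= eab eqxx. Qed.

Lemma pairr_cc_morphism g : cc_morphism e2 G (pair g).
Proof. by split=> [a b eab _ | w u v _ _ _ [] //]; rewrite /box_rel /= eab eqxx orbT. Qed.

Hypotheses (e1_irr : irreflexive e1) (e2_irr : irreflexive e2).
Hypotheses (T1_nontriv : nontrivial T1) (T2_nontriv : nontrivial T2).

Lemma hull_set_box_fst S : hull_set G S -> hull_set e1 (fst @: S).
Proof.
case/card_gt0P: (ltnW T2_nontriv) => h _.
exact: (hull_set_image box_rel_sym e1_sym fst_cc_morphism (g := fun x => (x, h))).
Qed.

Lemma hull_set_box_snd S : hull_set G S -> hull_set e2 (snd @: S).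
Proof.
case/card_gt0P: (ltnW T1_nontriv) => g _.
exact: (hull_set_image box_rel_sym e2_sym snd_cc_morphism (g := pair g)).
Qed.

Lemma hull_set_box_card S : hull_set G S -> 3 <= #|S|.
Proof.
move=> hS; rewrite leqNgt; apply/negP=> small.
have [a [b sSab]] : exists a b, S \subset [set a; b].
  move: small; rewrite ltnS leq_eqVlt ltnS leq_eqVlt ltnS leqn0.
  case/or3P=> [/cards2P[a [b [_ ->]]] | /cards1P[a ->] | /eqP/cards0_eq ->].
  - by exists a, b.
  - by exists a, a; rewrite setUid.
  - case/card_gt0P: (ltnW T1_nontriv) => g _; case/card_gt0P: (ltnW T2_nontriv) => h _.
    by exists (g, h), (g, h); rewrite sub0set.
have ab2 : a.2 != b.2.
  apply: (contraNneq _ (hull_set_nsub1 e2_sym b.2 T2_nontriv (hull_set_box_snd hS))) => ab2.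
  apply/subsetP=> _ /imsetP[x /(subsetP sSab) xab ->].
  by rewrite !inE in xab *; case/orP: xab => /eqP->; rewrite ?ab2.
have ab1 : a.1 != b.1.
  apply: (contraNneq _ (hull_set_nsub1 e1_sym b.1 T1_nontriv (hull_set_box_fst hS))) => ab1.
  apply/subsetP=> _ /imsetP[x /(subsetP sSab) xab ->].
  by rewrite !inE in xab *; case/orP: xab => /eqP->; rewrite ?ab1.
have indep : {in [set a; b] &, forall x y, ~~ G x y}.
  move=> x y; rewrite !inE /box_rel => /orP[]/eqP-> /orP[]/eqP->;
    rewrite ?e1_irr ?e2_irr ?andbF ?andFb // ?(eq_sym b.1) ?(eq_sym b.2);
    by rewrite (negbTE ab1) (negbTE ab2) !andbF.
have abT := hull_setP _ _ hS _ (cc_convex_indep box_rel_sym indep) sSab.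
have : #|[set: T1 * T2]| <= 2 by rewrite -abT cards2; case: (a != b).
rewrite cardsT card_prod leqNgt => /negP[].
exact: leq_trans _ (leq_mul T1_nontriv T2_nontriv).
Qed.

Lemma hn_cc_box_ge S : hull_set G S -> maxn (maxn (hn_cc e1) (hn_cc e2)) 3 <= #|S|.
Proof.
move=> hS; rewrite !geq_max hull_set_box_card // andbT.
apply/andP; split; apply: leq_trans (leq_imset_card _ S); apply: hn_cc_min.
- exact: hull_set_box_fst.
- exact: hull_set_box_snd.
Qed.

Hypotheses (e1_conn : graph_connected e1) (e2_conn : graph_connected e2).

Lemma box_cc_convex_cross C g0 h0 : cc_convex G C ->
  (forall g, (g, h0) \in C) -> (forall h, (g0, h) \in C) -> C = setT.
Proof.
move=> cC row0 col0.
suff rows : forall h, [forall g, (g, h) \in C].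
  by apply/setP=> [[g h]]; rewrite inE (forallP (rows h)).
apply: (connected_closed_all e2_sym e2_conn (x := h0)); last exact/forallP.
move=> h1 h2 e12 /forallP row1; apply/forallP.
apply: (connected_closed_all e1_sym e1_conn (x := g0)) (col0 h2).
move=> c d ecd cC2; apply: (cc_convex_square box_rel_sym cC cC2 (row1 c) (row1 d)).
- by apply: (contraTneq _ ecd) => -[<- _]; rewrite e1_irr.
- by rewrite /box_rel /= e1_sym ecd eqxx.
- by rewrite /box_rel /= e2_sym e12 eqxx orbT.
- by rewrite /box_rel /= e2_sym e12 eqxx orbT.
- by rewrite /box_rel /= ecd eqxx.
Qed.

Lemma hn_cc_box_le S1 S2 :
  hull_set e1 S1 -> hull_set e2 S2 -> hn_cc G <= #|S1| + #|S2| - 1.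
Proof.
move=> hS1 hS2.
have /set0Pn[g0 g0S1] := hull_set_neq0 e1_sym (ltnW T1_nontriv) hS1.
have /set0Pn[h0 h0S2] := hull_set_neq0 e2_sym (ltnW T2_nontriv) hS2.
pose row := (fun g => (g, h0)) @: S1; pose col := pair g0 @: S2.
have cK := cc_hull_convex G (row :|: col).
have /subUsetP[rowK colK] := subset_cc_hull G (row :|: col).
have hull_cross : hull_set G (row :|: col).
  apply/eqP/(box_cc_convex_cross cK (g0 := g0) (h0 := h0)).
  - exact: (hull_set_map_mem e1_sym box_rel_sym (pairl_cc_morphism h0) hS1 cK rowK).
  - exact: (hull_set_map_mem e2_sym box_rel_sym (pairr_cc_morphism g0) hS2 cK colK).
apply: leq_trans (hn_cc_min hull_cross) _; rewrite cardsU.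
have : 0 < #|row :&: col|.
  by apply/card_gt0P; exists (g0, h0); rewrite inE !imset_f.
have : #|row| <= #|S1| := leq_imset_card _ _.
have : #|col| <= #|S2| := leq_imset_card _ _.
lia.
Qed.

End BoxProduct.

Theorem mainTheorem7 (T1 T2 : finType) (e1 : rel T1) (e2 : rel T2) :
  simple_graph e1 -> simple_graph e2 ->
  nontrivial T1 -> nontrivial T2 ->
  graph_connected e1 -> graph_connected e2 ->
  maxn (maxn (hn_cc e1) (hn_cc e2)) 3 <= hn_cc (box_rel e1 e2) /\
  hn_cc (box_rel e1 e2) <= hn_cc e1 + hn_cc e2 - 1.
Proof.
move=> [e1_sym e1_irr] [e2_sym e2_irr] T1_nontriv T2_nontriv e1_conn e2_conn.
split.
- have [S hS <-] := hn_cc_witness (box_rel e1 e2).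
  exact: hn_cc_box_ge.
- have [S1 hS1 <-] := hn_cc_witness e1; have [S2 hS2 <-] := hn_cc_witness e2.
  exact: hn_cc_box_le.
Qed.
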